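(* Consider a synchronous fully connected network with a source node $0$ and peers $1,\dots,n-1$, with private authenticated point-to-point links, in which up to $t$ nodes (possibly including the source), $t<n/3$, $t\ge 1$, may be faulty and behave arbitrarily. Fix $c$ large enough and fixed publicly known coefficients defining $2(n-1)$ linear maps $y_1,\dots,y_{2(n-1)}:\mathrm{GF}(2^c)^{n-t}\to \mathrm{GF}(2^c)$ such that any $n-t$ of them are linearly independent. Run the following protocol: (Round 1) the source, holding data vector $\tilde x=(x_1,\dots,x_{n-t})\in \mathrm{GF}(2^c)^{n-t}$, sends to each peer $i$ the two packets $y_i(\tilde x)$ and $y_{n-1+i}(\tilde x)$; (Round 2) each peer $i$ sends the packet $y_i$ it received from the source to every other peer. Each fault-free peer, having received its two packets from the source and one packet (claimed to be $y_j$) from each other peer $j$, computes, for every subset of $n-t$ of these $n$ received packets, the solution $\tilde x'$ of the corresponding linear system; it is said to detect misbehavior if these solutions are not all equal (or some system has no solution), and otherwise it decides on the common solution. Then, whatever the faulty nodes do, either at least one fault-free peer detects misbehavior, or all fault-free peers decide on the same vector, and if the source is fault-free this vector equals the source's data vector $\tilde x$.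
   Context: A faulty source may send packets to the peers that are not all values of the maps $y_i$ at a single vector; a faulty peer may forward arbitrary (tampered) packets to other peers. Fault-free nodes follow the protocol exactly. *)

From mathcomp Require Import all_boot all_algebra.
Set Implicit Arguments. Unset Strict Implicit. Unset Printing Implicit Defensive.
Import GRing.Theory.
Local Open Scope ring_scope.

Section Protocol.
Variable F : fieldType.

(* The linear maps y_k : F^m -> F (k = 1..2(n-1), 1-based as in the paper),
   given by public coefficients coef k. *)
Definition ymap (m : nat) (coef : nat -> 'I_m -> F) (k : nat) (x : 'rV[F]_m) : F :=
  \sum_(j < m) coef k j * x 0 j.

Definition any_independent (m N : nat) (coef : nat -> 'I_m -> F) : Prop :=
  forall f : 'I_m -> nat, injective f -> (forall a, (1 <= f a <= N)%N) ->
    row_free (\matrix_(a < m, b < m) coef (f a) b).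

Variable n : nat.

(* The n packets held by peer i after round 2 are labelled by l : 'I_n:
   label 0 = second packet from the source, claimed y_(n-1+i);
   label i = first packet from the source, claimed y_i;
   label j (j <> 0, j <> i) = packet forwarded by peer j, claimed y_j. *)
Definition label_map (i l : 'I_n) : nat :=
  if (l == 0 :> nat) then (n.-1 + i)%N else l.

Definition label_val (s1 s2 : 'I_n -> F) (r : 'I_n -> 'I_n -> F) (i l : 'I_n) : F :=
  if (l == 0 :> nat) then s2 i else if l == i then s1 i else r i l.

Variable m : nat.
Variable coef : nat -> 'I_m -> F.
Variables (s1 s2 : 'I_n -> F) (r : 'I_n -> 'I_n -> F).

Definition solves (i : 'I_n) (S : {set 'I_n}) (z : 'rV[F]_m) : Prop :=
  forall l, l \in S -> ymap coef (label_map i l) z = label_val s1 s2 r i l.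

Definition decides (i : 'I_n) (v : 'rV[F]_m) : Prop :=
  forall S : {set 'I_n}, #|S| = m -> forall z, solves i S z <-> z = v.

(* misbehavior detected: the solutions are not all equal (or some system
   has no, or no unique, solution) *)
Definition detects (i : 'I_n) : Prop := ~ exists v, decides i v.

End Protocol.

Definition is_source (n : nat) (j : 'I_n) : bool := (j == 0 :> nat).

(** A fault-free peer that decides has a unique solution to every system of
    [n - t] of its packets, so it suffices to exhibit one such system whose
    packets are known.  If the source is fault-free, the packets of the source
    and of the fault-free peers (at least [n - t] of them) are all correct
    values of the maps at [x], so every deciding peer decides [x].  If the
    source is faulty, the packets labelled by the fault-free peers (again at
    least [n - t]) are the same at every fault-free peer, because fault-free
    peers forward faithfully; these common systems force all decisions to
    coincide. *)

From mathcomp Require Import all_boot all_algebra.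
From mathcomp Require Import zify.
From Stdlib Require Import Classical.
Set Implicit Arguments. Unset Strict Implicit.
Local Open Scope ring_scope.

Lemma exists_subset_card (T : finType) (A : {set T}) k :
  (k <= #|A|)%N -> exists2 S : {set T}, S \subset A & #|S| = k.
Proof.
move=> le_kA; exists [set x in take k (enum A)].
  by apply/subsetP => x; rewrite inE => /mem_take; rewrite mem_enum.
by rewrite cardsE (card_uniqP _) ?take_uniq ?enum_uniq // size_takel -?cardE.
Qed.

Section FaultFreeSystems.

Variables (F : fieldType) (n m : nat) (coef : nat -> 'I_m -> F).
Variables (s1 s2 : 'I_n -> F) (r : 'I_n -> 'I_n -> F) (Fs : {set 'I_n}).

Hypothesis fault_free_forward : forall i j : 'I_n,
  ~~ is_source i -> ~~ is_source j -> i != j -> i \notin Fs -> j \notin Fs ->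
  r i j = s1 j.
Hypothesis enough_fault_free : (m + #|Fs| <= n)%N.

Lemma exists_system_within (P : {set 'I_n}) :
  ~: P \subset Fs -> exists2 S : {set 'I_n}, S \subset P & #|S| = m.
Proof.
move=> sCP_Fs; apply: exists_subset_card.
have := cardsC P; have := subset_leq_card sCP_Fs; rewrite card_ord; lia.
Qed.

Lemma decides_solves i v (S : {set 'I_n}) :
  decides coef s1 s2 r i v -> #|S| = m -> solves coef s1 s2 r i S v.
Proof. by move=> dec_v cardS; apply/(dec_v S cardS v). Qed.

Lemma label_map_peer (i l : 'I_n) : ~~ is_source l -> label_map i l = l.
Proof. by rewrite /label_map /is_source => /negbTE ->. Qed.

Lemma label_val_fault_free (i l : 'I_n) :
  ~~ is_source i -> ~~ is_source l -> i \notin Fs -> l \notin Fs ->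
  label_val s1 s2 r i l = s1 l.
Proof.
move=> src_i src_l Fs_i Fs_l; rewrite /label_val [_ == _](negbTE src_l).
by have [-> // | ne_li] := eqVneq l i; rewrite fault_free_forward // eq_sym.
Qed.

Definition fault_free_peers : {set 'I_n} :=
  [set l | ~~ is_source l & l \notin Fs].

Lemma solves_fault_free_peers i (S : {set 'I_n}) z :
  ~~ is_source i -> i \notin Fs -> S \subset fault_free_peers ->
  solves coef s1 s2 r i S z <-> {in S, forall l : 'I_n, ymap coef l z = s1 l}.
Proof.
move=> src_i Fs_i sSP.
have labelsE l : l \in S ->
      ymap coef (label_map i l) z = label_val s1 s2 r i l <->
      ymap coef l z = s1 l.
  move=> Sl; have := subsetP sSP l Sl; rewrite inE => /andP [src_l Fs_l].
  by rewrite label_map_peer // label_val_fault_free.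
by split=> sol l Sl; apply/(labelsE l Sl); apply: sol.
Qed.

Lemma fault_free_peers_agree i k v w :
  (forall j : 'I_n, is_source j -> j \in Fs) ->
  ~~ is_source i -> i \notin Fs -> ~~ is_source k -> k \notin Fs ->
  decides coef s1 s2 r i v -> decides coef s1 s2 r k w -> v = w.
Proof.
move=> source_faulty src_i Fs_i src_k Fs_k dec_v dec_w.
have [S sSP cardS] :
    exists2 S : {set 'I_n}, S \subset fault_free_peers & #|S| = m.
  apply: exists_system_within.
  apply/subsetP => l; rewrite !inE negb_and !negbK.
  by case/orP=> // /source_faulty.
symmetry; apply/(dec_v S cardS w)/(solves_fault_free_peers _ src_i Fs_i sSP).
exact/(solves_fault_free_peers _ src_k Fs_k sSP)/(decides_solves dec_w cardS).
Qed.

Lemma decides_source_data (x : 'rV[F]_m) i v :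
  (forall i : 'I_n, ~~ is_source i ->
     s1 i = ymap coef i x /\ s2 i = ymap coef (n.-1 + i) x) ->
  ~~ is_source i -> i \notin Fs -> decides coef s1 s2 r i v -> v = x.
Proof.
move=> src_data src_i Fs_i dec_v.
pose Q := [set l : 'I_n | is_source l || (l \notin Fs)].
have [S sSQ cardS] : exists2 S : {set 'I_n}, S \subset Q & #|S| = m.
  apply: exists_system_within.
  by apply/subsetP => l; rewrite !inE negb_or negbK => /andP [].
symmetry; apply/(dec_v S cardS x) => l Sl.
have [src_l | peer_l] := boolP (is_source l).
  by rewrite /label_map /label_val [_ == _]src_l; case: (src_data i src_i).
have Fs_l : l \notin Fs.
  by move: (subsetP sSQ l Sl); rewrite inE (negbTE peer_l).
by rewrite label_map_peer // label_val_fault_free //; case: (src_data l peer_l).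
Qed.

End FaultFreeSystems.

Theorem theorem1 (F : finFieldType) (c n t : nat)
  (hF : #|F| = (2 ^ c)%N) (ht1 : (1 <= t)%N) (htn : (3 * t < n)%N)
  (coef : nat -> 'I_(n - t) -> F)
  (hind : any_independent (2 * n.-1) coef)
  (Fs : {set 'I_n}) (hFs : (#|Fs| <= t)%N)
  (x : 'rV[F]_(n - t))
  (s1 s2 : 'I_n -> F) (r : 'I_n -> 'I_n -> F)
  (* round 1: a fault-free source sends y_i(x) and y_(n-1+i)(x) to peer i *)
  (hsrc : forall j : 'I_n, is_source j -> j \notin Fs ->
     forall i : 'I_n, ~~ is_source i ->
       s1 i = ymap coef i x /\ s2 i = ymap coef (n.-1 + i) x)
  (* round 2: a fault-free peer j forwards to peer i what it got as y_j *)
  (hfwd : forall i j : 'I_n, ~~ is_source i -> ~~ is_source j -> i != j ->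
     i \notin Fs -> j \notin Fs -> r i j = s1 j) :
  (exists i : 'I_n, [/\ ~~ is_source i, i \notin Fs & detects coef s1 s2 r i])
  \/
  (exists v : 'rV[F]_(n - t),
     (forall i : 'I_n, ~~ is_source i -> i \notin Fs -> decides coef s1 s2 r i v)
     /\ (forall j : 'I_n, is_source j -> j \notin Fs -> v = x)).
Proof.
have enough : (n - t + #|Fs| <= n)%N by lia.
have [some_detects | no_detects] := classic
  (exists i : 'I_n, [/\ ~~ is_source i, i \notin Fs & detects coef s1 s2 r i]).
  by left.
right.
have decision i :
    ~~ is_source i -> i \notin Fs -> exists v, decides coef s1 s2 r i v.
  by move=> src_i Fs_i; apply: NNPP => no_v; apply: no_detects; exists i.
have [/existsP [j /andP [src_j Fs_j]] | faulty_source] :=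
    boolP [exists j, is_source j && (j \notin Fs)].
  exists x; split=> [i src_i Fs_i | //].
  have [v dec_v] := decision i src_i Fs_i.
  by rewrite -(decides_source_data hfwd enough (hsrc j src_j Fs_j)
                 src_i Fs_i dec_v).
have source_faulty j : is_source j -> j \in Fs.
  move=> src_j; apply: contraNT faulty_source => Fs_j.
  by apply/existsP; exists j; rewrite src_j.
have [/existsP [i0 /andP [src_i0 Fs_i0]] | no_peer] :=
    boolP [exists i, ~~ is_source i && (i \notin Fs)].
  have [v0 dec_v0] := decision i0 src_i0 Fs_i0.
  exists v0; split=> [i src_i Fs_i | j src_j]; last by rewrite source_faulty.
  have [v dec_v] := decision i src_i Fs_i.
  by rewrite (fault_free_peers_agree hfwd enough source_faulty
                src_i0 Fs_i0 src_i Fs_i dec_v0 dec_v).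
exists x; split=> [i src_i Fs_i | //].
by move: no_peer => /existsPn /(_ i); rewrite src_i Fs_i.
Qed.
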